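(* Let $T>0$, $\gamma\in(0,T]$, $\mathcal{T}=[0,T]$, and let $\mathcal{D}$ be the set of Lebesgue measurable functions $\delta:\mathcal{T}\to[-1,1]$ with $\int_{\mathcal{T}}|\delta(t)|\,\mathrm{d}t\le\gamma$. Let $\mathcal{D}^+_\downarrow\subseteq\mathcal{D}$ be the set of those $\delta\in\mathcal{D}$ that are nonnegative, nonincreasing and left-continuous. Let $\eta^+,\eta^-\in(0,1]$ and, for $x^b\in\mathbb{R}$, $x^r\ge 0$, $y_0\in\mathbb{R}$, $\delta\in\mathcal{D}$, $t\in\mathcal{T}$, let $$y(x^b,x^r,\delta,y_0,t)=y_0+\int_0^t\Big(\eta^+\big[x^b+\delta(s)x^r\big]^+-\tfrac{1}{\eta^-}\big[x^b+\delta(s)x^r\big]^-\Big)\,\mathrm{d}s .$$ Then for any $x^b\in\mathbb{R}$, $y_0\in\mathbb{R}$ and any $x^r\ge 0$, $$\max_{\delta\in\mathcal{D},\,t\in\mathcal{T}} y(x^b,x^r,\delta,y_0,t)=\max_{\delta\in\mathcal{D}^+_\downarrow,\,t\in\mathcal{T}} y(x^b,x^r,\delta,y_0,t).$$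
   Context: $[a]^+=\max\{a,0\}$ and $[a]^-=\max\{-a,0\}$. Here $x^b$ is the base charging power of a battery, $x^r$ the reserve capacity offered for frequency regulation, $\delta$ a normalized frequency-deviation trajectory, $\eta^\pm$ charging/discharging efficiencies, and $y$ the state-of-charge. *)

From HB Require Import structures.
From mathcomp Require Import all_boot all_order all_algebra.
From mathcomp Require Import all_classical all_reals all_analysis.
Set Implicit Arguments. Unset Strict Implicit. Unset Printing Implicit Defensive.
Import Order.TTheory GRing.Theory Num.Theory.
Import numFieldNormedType.Exports.
Local Open Scope classical_set_scope.
Local Open Scope ring_scope.

(* The measurable space of Lebesgue measurable subsets of R
   (the completion / Caratheodory sigma-algebra of the Lebesgue measure). *)
Definition LebR (R : realType) :=
  caratheodory_type (R:=R) (@wlength R idfun)^*%mu.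

Definition lebm (R : realType) : set (LebR R) -> \bar R :=
  @completed_lebesgue_measure R.

Definition leb_measurable (R : realType) (A : set R) (f : R -> R) : Prop :=
  @measurable_fun _ _ (LebR R) R A f.

Definition ppart (R : realType) (a : R) : R := Num.max a 0.
Definition npart (R : realType) (a : R) : R := Num.max (- a) 0.

Definition inD (R : realType) (T gamma : R) (d : R -> R) : Prop :=
  leb_measurable `[0, T] d /\
  (forall t : R, 0 <= t <= T -> -1 <= d t <= 1) /\
  (\int[@lebm R]_(x in (`[0%R, T] : set R)) (`|d x|)%:E <= gamma%:E)%E.

Definition inDpd (R : realType) (T gamma : R) (d : R -> R) : Prop :=
  inD T gamma d /\
  (forall t : R, 0 <= t <= T -> 0 <= d t) /\
  (forall s t : R, 0 <= s -> s <= t -> t <= T -> d t <= d s) /\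
  (forall t : R, 0 < t <= T -> d x @[x --> t^'-] --> d t).

Definition soc (R : realType) (etap etam xb xr : R) (d : R -> R) (y0 t : R) : R :=
  y0 + Rintegral (@lebm R) `[0, t]
         (fun s => etap * ppart (xb + d s * xr) - etam^-1 * npart (xb + d s * xr)).

Definition is_max (R : realType) (S : set R) (v : R) : Prop :=
  S v /\ (forall w, S w -> w <= v).

From HB Require Import structures.
From mathcomp Require Import all_boot all_order all_algebra.
From mathcomp Require Import all_classical all_reals all_analysis.
From mathcomp Require Import measurable_realfun.
From mathcomp Require Import ring lra.
Set Implicit Arguments.
Unset Strict Implicit.
Unset Printing Implicit Defensive.
Import Order.TTheory GRing.Theory Num.Theory.
Import numFieldNormedType.Exports.
Local Open Scope classical_set_scope.
Local Open Scope ring_scope.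

(* The rate g(u) = etap [xb + u xr]^+ - etam^-1 [xb + u xr]^- satisfies
   g(u) <= etap (xb + u xr), with equality when xb + u xr >= 0, since
   etap <= 1 <= etam^-1.  Any bound g(u) <= B + A |u| on [-1, 1] therefore
   gives y <= y0 + B T + A gamma for every admissible delta and t, because
   int |delta| <= gamma.  According to the signs of xb and xb + xr one takes
   (B, A) = (etap xb, etap xr), (0, etap (xb + xr)) or (0, 0); the step
   deviation delta* = 1 on [0, gamma], 0 afterwards, attains the resulting
   bound at t = T, t = gamma or t = 0 respectively, and it is nonnegative,
   nonincreasing and left-continuous. *)

Section integral_majorant.
Context d (T : measurableType d) (R : realType).
Variable mu : {measure set T -> \bar R}.
Local Open Scope ereal_scope.

Lemma le_integral_ge0_majorant (D : set T) (f h : T -> \bar R) :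
  measurable D -> measurable_fun D f -> measurable_fun D h ->
  (forall x, D x -> 0 <= h x) -> (forall x, D x -> f x <= h x) ->
  \int[mu]_(x in D) f x <= \int[mu]_(x in D) h x.
Proof.
move=> mD mf mh h0 fh; rewrite integralE.
have fneg0 : 0 <= \int[mu]_(x in D) f^\- x.
  by apply: integral_ge0 => x _; exact: funeneg_ge0.
apply: (le_trans (leeB (lexx _) fneg0)); rewrite sube0.
apply: ge0_le_integral => //; first exact: measurable_funepos.
by move=> x Dx; rewrite funeposE ge_max fh // h0.
Qed.

End integral_majorant.

Lemma fine_le_ge0 (R : realType) (x : \bar R) (c : R) :
  (x <= c%:E)%E -> 0 <= c -> fine x <= c.
Proof. by case: x => [r| |] //=; rewrite lee_fin. Qed.

Section lebesgue_sigma_algebra.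
Context {R : realType}.

Lemma measurable_Leb (A : set R) :
  measurable (A : set (measurableTypeR R)) -> measurable (A : set (LebR R)).
Proof. exact: sub_caratheodory. Qed.

Lemma measurable_Leb_itv (i : interval R) : measurable ([set` i] : set (LebR R)).
Proof. by apply: measurable_Leb; exact: measurable_itv. Qed.

Lemma measurable_fun_Leb (D : set R) (f : R -> R) :
  measurable_fun (setT : set (measurableTypeR R)) f ->
  measurable_fun (D : set (LebR R)) f.
Proof.
move=> mf mD Y mY; apply: measurableI => //; apply: measurable_Leb.
by have := mf measurableT Y mY; rewrite setTI.
Qed.

Lemma lebm_itv_cc (a b : R) : a <= b -> lebm (`[a, b] : set R) = (b - a)%:E.
Proof.
rewrite [lebm _]lebesgue_measure_itv /= lte_fin le_eqVlt => /orP[/eqP->|->].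
  by rewrite ltxx subrr.
by rewrite EFinB.
Qed.

Lemma Rintegral_Leb_cst_cc (t c : R) : 0 <= t ->
  Rintegral (@lebm R) `[0, t] (fun=> c) = t * c.
Proof.
move=> t0; rewrite Rintegral_cst; last exact: measurable_Leb_itv.
by rewrite -[fine _]/(fine (lebm (`[0, t] : set R))) lebm_itv_cc // subr0 mulrC.
Qed.

End lebesgue_sigma_algebra.

Section state_of_charge_bound.
Context {R : realType}.
Variables (etap etam xb xr : R).

Definition soc_rate (u : R) : R :=
  etap * ppart (xb + u * xr) - etam^-1 * npart (xb + u * xr).

Lemma socE d y0 t :
  soc etap etam xb xr d y0 t = y0 + Rintegral (@lebm R) `[0, t] (soc_rate \o d).
Proof. by []. Qed.

Lemma measurable_soc_rate : measurable_fun setT soc_rate.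
Proof.
apply: measurable_funB; apply: measurable_funM => //;
  apply: measurable_maxr => //; try apply: measurable_funN;
  apply: measurable_funD => //; exact: measurable_funM.
Qed.

Lemma soc_rateE_ge0 u : 0 <= xb + u * xr -> soc_rate u = etap * (xb + u * xr).
Proof.
move=> h; rewrite /soc_rate /ppart /npart max_l // max_r; last by rewrite oppr_le0.
by rewrite mulr0 subr0.
Qed.

Lemma soc_rate_le_linear u : etap <= 1 -> 0 < etam <= 1 ->
  soc_rate u <= etap * (xb + u * xr).
Proof.
move=> p1 /andP[m0 m1].
have [h|h] := leP 0 (xb + u * xr); first by rewrite soc_rateE_ge0.
rewrite /soc_rate /ppart /npart max_r ?(ltW h) // max_l; last by rewrite oppr_ge0 ltW.
have m1' : 1 <= etam^-1 by rewrite invf_ge1.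
set a := xb + u * xr in h *; nra.
Qed.

Variables (T gamma : R).
Hypothesis gamma_ge0 : 0 <= gamma.

Lemma integral_affine_abs_le (A B : R) d : 0 <= T -> 0 <= A -> 0 <= B ->
  inD T gamma d ->
  (\int[@lebm R]_(x in (`[0%R, T] : set R)) (B + A * `|d x|)%:E <= (B * T + A * gamma)%:E)%E.
Proof.
move=> T0 A0 B0 [md [_ dint]].
have mT : measurable (`[0, T] : set (LebR R)) := measurable_Leb_itv _.
have mabs : measurable_fun (`[0, T] : set (LebR R)) (fun x => `|d x|).
  exact: measurableT_comp (@normr_measurable R setT) md.
under eq_integral do rewrite EFinD EFinM.
rewrite ge0_integralD //; last 2 first.
- by move=> x _; rewrite lee_fin mulr_ge0.
- by apply/measurable_EFinP; exact: measurable_funM.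
rewrite ge0_integralZl_EFin //; last exact/measurable_EFinP.
rewrite integral_cst // -[X in (_ * X)%E]/(lebm (`[0, T] : set R)) lebm_itv_cc // subr0.
rewrite EFinD !EFinM leeD2l //.
move: dint; rewrite /lebm => dint.
by apply: lee_wpmul2l; first rewrite lee_fin.
Qed.

Lemma soc_le_of_rate_le (A B : R) d y0 t : 0 <= A -> 0 <= B ->
  (forall u, -1 <= u <= 1 -> soc_rate u <= B + A * `|u|) ->
  inD T gamma d -> 0 <= t <= T ->
  soc etap etam xb xr d y0 t <= y0 + (B * T + A * gamma).
Proof.
move=> A0 B0 rate_le dD /andP[t0 tT]; have [md [drange _]] := dD.
have T0 := le_trans t0 tT.
have mT : measurable (`[0, T] : set (LebR R)) := measurable_Leb_itv _.
have mt : measurable (`[0, t] : set (LebR R)) := measurable_Leb_itv _.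
have tsubT : (`[0, t] : set R) `<=` `[0, T].
  by move=> x /=; rewrite !in_itv /= => /andP[-> xt]; rewrite (le_trans xt tT).
have mbound : measurable_fun (`[0, T] : set (LebR R)) (fun x => B + A * `|d x|).
  apply: measurable_funD; first exact: measurable_cst.
  apply: measurable_funM; first exact: measurable_cst.
  exact: measurableT_comp (@normr_measurable R setT) md.
rewrite socE lerD2l; apply: fine_le_ge0; last by rewrite addr_ge0 ?mulr_ge0.
apply: le_trans _ (integral_affine_abs_le T0 A0 B0 dD).
apply: (@le_trans _ _ (\int[@lebm R]_(x in (`[0%R, t] : set R)) (B + A * `|d x|)%:E)%E).
  apply: le_integral_ge0_majorant => //.
  - apply/measurable_EFinP; apply: measurableT_comp measurable_soc_rate _.
    exact: measurable_funS mT tsubT md.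
  - exact/measurable_EFinP/(measurable_funS mT tsubT).
  - by move=> x _; rewrite lee_fin addr_ge0 ?mulr_ge0.
  move=> x /tsubT /=; rewrite in_itv /= => xT.
  by rewrite lee_fin rate_le // drange.
apply: ge0_subset_integral => //; first exact/measurable_EFinP.
by move=> x _; rewrite lee_fin addr_ge0 ?mulr_ge0.
Qed.

End state_of_charge_bound.

Section step_deviation.
Context {R : realType}.
Variables (T gamma : R).
Hypothesis hgamma : 0 <= gamma <= T.

Definition step_deviation : R -> R := \1_(`]-oo, gamma] : set R).

Lemma step_deviationE x : step_deviation x = if x <= gamma then 1 else 0.
Proof.
by rewrite /step_deviation indicE mem_setE in_itv /=; case: (x <= gamma).
Qed.

Lemma integral_step_deviation :
  (\int[@lebm R]_(x in (`[0%R, T] : set R)) (step_deviation x)%:E = gamma%:E)%E.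
Proof.
have [g0 gT] := andP hgamma.
rewrite integral_indic; [|exact: measurable_Leb_itv|exact: measurable_Leb_itv].
have -> : (`]-oo, gamma] `&` `[0, T] : set R) = `[0, gamma]%classic.
  apply/seteqP; split => x /=; rewrite !in_itv /=; first by case=> -> /andP[-> _].
  by move=> /andP[-> xg]; rewrite (le_trans xg gT).
by have := lebm_itv_cc g0; rewrite subr0 => <-.
Qed.

Lemma step_deviation_cvg_left t : step_deviation x @[x --> t^'-] --> step_deviation t.
Proof.
apply: cvg_near_cst; have [tg|gt] := leP t gamma.
  near=> x; have xt : x < t by near: x; exact: nbhs_left_lt.
  by rewrite !step_deviationE tg (le_trans (ltW xt) tg).
near=> x; have gx : gamma < x by near: x; exact: nbhs_left_gt.
by rewrite !step_deviationE !leNgt gt gx.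
Unshelve. all: by end_near.
Qed.

Lemma step_deviation_inDpd : inDpd T gamma step_deviation.
Proof.
split; [split; [|split]|split; [|split]].
- by apply: measurable_fun_Leb; apply: measurable_indic; exact: measurable_itv.
- by move=> t _; rewrite step_deviationE; case: ifP => _; apply/andP; split; lra.
- rewrite (eq_integral (fun x : LebR R => (step_deviation x)%:E)).
    by rewrite integral_step_deviation.
  by move=> x _; rewrite ger0_norm // step_deviationE; case: ifP.
- by move=> t _; rewrite step_deviationE; case: ifP.
- move=> s t _ st _; rewrite !step_deviationE.
  case: ifP => [tg|_]; first by rewrite (le_trans st tg).
  by case: ifP.
- by move=> t _; exact: step_deviation_cvg_left.
Qed.

End step_deviation.

Section soc_of_step_deviation.
Context {R : realType}.
Variables (etap etam xb xr y0 : R).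

Lemma soc_step_deviation_le (gamma t : R) : 0 <= t <= gamma ->
  soc etap etam xb xr (step_deviation gamma) y0 t = y0 + t * soc_rate etap etam xb xr 1.
Proof.
move=> /andP[t0 tg]; rewrite socE -Rintegral_Leb_cst_cc //; congr (_ + _).
apply: eq_Rintegral => x; rewrite inE /= in_itv /= => /andP[_ xt].
by rewrite /= step_deviationE (le_trans xt tg).
Qed.

Lemma soc_step_deviation_T (T gamma : R) : 0 <= gamma <= T ->
  0 <= etap -> 0 <= xb -> 0 <= xr ->
  soc etap etam xb xr (step_deviation gamma) y0 T =
    y0 + etap * (xb * T + xr * gamma).
Proof.
move=> hgamma p0 xb0 xr0; have T0 := le_trans (andP hgamma).1 (andP hgamma).2.
have mT : measurable (`[0, T] : set (LebR R)) := measurable_Leb_itv _.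
have step0 x : 0 <= step_deviation gamma x by rewrite step_deviationE; case: ifP.
rewrite socE; congr (_ + _); rewrite /Rintegral.
rewrite (eq_integral (fun x : LebR R =>
    ((etap * xb)%:E + (etap * xr)%:E * (step_deviation gamma x)%:E)%E)); last first.
  move=> x _; rewrite /= soc_rateE_ge0 ?addr_ge0 ?mulr_ge0 //.
  by rewrite -EFinM -EFinD; congr (_%:E); ring.
have mstep : measurable_fun (`[0, T] : set (LebR R)) (step_deviation gamma).
  by apply: measurable_fun_Leb; apply: measurable_indic; exact: measurable_itv.
rewrite ge0_integralD //; last 3 first.
- by move=> x _; rewrite lee_fin mulr_ge0.
- by move=> x _; rewrite -EFinM lee_fin !mulr_ge0.
- by apply/measurable_EFinP; apply: measurable_funM; [exact: measurable_cst|exact: mstep].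
rewrite ge0_integralZl_EFin //; last 3 first.
- by move=> x _; rewrite lee_fin.
- exact/measurable_EFinP.
- exact: mulr_ge0.
rewrite integral_step_deviation // integral_cst //.
rewrite -[X in (_ * X + _)%E]/(lebm (`[0, T] : set R)) lebm_itv_cc // subr0 /=.
by rewrite mulrDr !mulrA.
Qed.

End soc_of_step_deviation.

Section soc_maximizer.
Context {R : realType}.
Variables (T gamma etap etam xb xr y0 : R).

Definition soc_maximizer (d0 : R -> R) (t0 : R) : Prop :=
  0 <= t0 <= T /\ forall d t, inD T gamma d -> 0 <= t <= T ->
    soc etap etam xb xr d y0 t <= soc etap etam xb xr d0 y0 t0.

Lemma is_max_soc_of_maximizer d0 t0 :
  inDpd T gamma d0 -> soc_maximizer d0 t0 ->
  exists v : R,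
    is_max [set y | exists d t, inD T gamma d /\ 0 <= t <= T /\
                                y = soc etap etam xb xr d y0 t] v /\
    is_max [set y | exists d t, inDpd T gamma d /\ 0 <= t <= T /\
                                y = soc etap etam xb xr d y0 t] v.
Proof.
move=> d0D [t0T t0max]; exists (soc etap etam xb xr d0 y0 t0).
split; split.
- by exists d0, t0; split; [exact: d0D.1|split].
- by move=> _ [d [t [dD [tT ->]]]]; exact: t0max.
- by exists d0, t0.
- by move=> _ [d [t [[dD _] [tT ->]]]]; exact: t0max.
Qed.

Hypotheses (hgamma : 0 < gamma <= T) (hetap : 0 < etap <= 1)
  (hetam : 0 < etam <= 1) (hxr : 0 <= xr).

Lemma step_deviation_maximizer_T :
  0 <= xb -> soc_maximizer (step_deviation gamma) T.
Proof.
move=> xb0; have [g0 gT] := andP hgamma; have [p0 p1] := andP hetap.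
split; first by rewrite lexx (ltW (lt_le_trans g0 gT)).
move=> d t dD tT; rewrite soc_step_deviation_T ?(ltW g0) ?gT ?(ltW p0) //.
rewrite mulrDr !mulrA.
apply: soc_le_of_rate_le; rewrite ?mulr_ge0 ?(ltW p0) ?(ltW g0) //.
move=> u _; apply: le_trans (soc_rate_le_linear _ _ _ p1 hetam) _.
rewrite mulrDr lerD2l -mulrA; apply: ler_wpM2l; first exact: ltW.
by rewrite mulrC; apply: ler_wpM2l => //; exact: ler_norm.
Qed.

Lemma step_deviation_maximizer_gamma :
  xb <= 0 -> 0 <= xb + xr -> soc_maximizer (step_deviation gamma) gamma.
Proof.
move=> xb0 xbr0; have [g0 gT] := andP hgamma; have [p0 p1] := andP hetap.
split; first by rewrite (ltW g0) gT.
move=> d t dD tT; rewrite soc_step_deviation_le ?lexx ?(ltW g0) //.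
rewrite soc_rateE_ge0 mul1r // (_ : gamma * _ = 0 * T + etap * (xb + xr) * gamma);
  last by ring.
apply: soc_le_of_rate_le; rewrite ?mulr_ge0 ?(ltW p0) ?(ltW g0) //.
move=> u /andP[u_ge u_le]; apply: le_trans (soc_rate_le_linear _ _ _ p1 hetam) _.
rewrite add0r -mulrA; apply: ler_wpM2l; first exact: ltW.
by have [u0|u0] := leP 0 u; [rewrite ger0_norm //|rewrite ltr0_norm //]; nra.
Qed.

Lemma step_deviation_maximizer_0 :
  xb + xr <= 0 -> soc_maximizer (step_deviation gamma) 0.
Proof.
move=> xbr0; have [g0 gT] := andP hgamma; have [p0 p1] := andP hetap.
split; first by rewrite lexx (ltW (lt_le_trans g0 gT)).
move=> d t dD tT; rewrite soc_step_deviation_le ?lexx ?(ltW g0) // mul0r addr0.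
have := @soc_le_of_rate_le _ etap etam xb xr T gamma (ltW g0) 0 0 d y0 t (lexx 0) (lexx 0).
rewrite !mul0r !addr0; apply=> // u /andP[u_ge u_le].
apply: le_trans (soc_rate_le_linear _ _ _ p1 hetam) _.
have uxr_le : u * xr <= xr by rewrite -[leRHS]mul1r ler_wpM2r.
by rewrite mul0r addr0; apply: mulr_ge0_le0; [exact: ltW | lra].
Qed.

End soc_maximizer.

Theorem lemma2 (R : realType) (T gamma etap etam : R)
  (hT : 0 < T) (hgamma : 0 < gamma <= T)
  (hetap : 0 < etap <= 1) (hetam : 0 < etam <= 1)
  (xb y0 xr : R) (hxr : 0 <= xr) :
  exists v : R,
    is_max [set y | exists d t, inD T gamma d /\ 0 <= t <= T /\
                                y = soc etap etam xb xr d y0 t] v /\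
    is_max [set y | exists d t, inDpd T gamma d /\ 0 <= t <= T /\
                                y = soc etap etam xb xr d y0 t] v.
Proof.
have [t0 t0_max] :
    exists t0, soc_maximizer T gamma etap etam xb xr y0 (step_deviation gamma) t0.
  have [xb0|/ltW xb0] := leP 0 xb.
    by exists T; exact: step_deviation_maximizer_T.
  have [xbr0|/ltW xbr0] := leP 0 (xb + xr).
    by exists gamma; exact: step_deviation_maximizer_gamma.
  by exists 0; exact: step_deviation_maximizer_0.
apply: is_max_soc_of_maximizer t0_max.
by apply: step_deviation_inDpd; rewrite (ltW (andP hgamma).1) (andP hgamma).2.
Qed.
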